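(* Let $R$ be a ring with identity, ${}_RM$ a finitely generated semisimple left $R$-module and $\varphi:M\to M$ a nilpotent $R$-endomorphism. Then the centralizer $C_\varphi=\{\psi\in\mathrm{Hom}_R(M,M)\mid\psi\circ\varphi=\varphi\circ\psi\}$, as a $Z(R)$-submodule of $\mathrm{Hom}_R(M,M)$, is a homomorphic image (as $Z(R)$-modules) of some $Z(R)$-submodule of a certain left $R$-submodule of $M_{m\times m}(R[t])$ generated by $md$ elements, where $d=\dim_R(M)$ and $m=\dim_R(\ker(\varphi))$.
   Context: $Z(R)$ is the centre of $R$, $R[t]$ the polynomial ring in a commuting indeterminate $t$, and $\dim_R$ denotes composition length. *)

From HB Require Import structures.
From mathcomp Require Import all_boot all_order all_algebra.
Set Implicit Arguments. Unset Strict Implicit. Unset Printing Implicit Defensive.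
Import GRing.Theory.
Local Open Scope ring_scope.

Definition Rlinear (R : nzRingType) (M N : lmodType R) (f : M -> N) : Prop :=
  forall (r : R) (x y : M), f (r *: x + y) = r *: f x + f y.

Definition submod (R : nzRingType) (M : lmodType R) (P : M -> Prop) : Prop :=
  [/\ P 0, (forall x y, P x -> P y -> P (x + y)) & (forall (r : R) x, P x -> P (r *: x))].

Definition fin_gen (R : nzRingType) (M : lmodType R) : Prop :=
  exists s : seq M, forall x : M, exists r : nat -> R,
    x = \sum_(i < size s) r i *: s`_i.

Definition semisimple (R : nzRingType) (M : lmodType R) : Prop :=
  forall N : M -> Prop, submod N ->
    exists N' : M -> Prop, [/\ submod N',
      (forall x, N x -> N' x -> x = 0) &
      (forall x, exists a b, [/\ N a, N' b & x = a + b])].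

Definition comp_length (R : nzRingType) (M : lmodType R) (P : M -> Prop) (n : nat)
  : Prop :=
  exists N : nat -> M -> Prop,
    [/\ forall i, submod (N i),
        (forall x, N 0%N x <-> x = 0),
        (forall x, N n x <-> P x) &
        forall i, (i < n)%N ->
          [/\ (forall x, N i x -> N i.+1 x),
              (exists x, N i.+1 x /\ ~ N i x) &
              forall Q : M -> Prop, submod Q ->
                (forall x, N i x -> Q x) -> (forall x, Q x -> N i.+1 x) ->
                (forall x, Q x <-> N i x) \/ (forall x, Q x <-> N i.+1 x)]].

Definition central (R : nzRingType) (z : R) : Prop := forall x : R, z * x = x * z.

Definition nilpotent_map (R : nzRingType) (M : lmodType R) (f : M -> M) : Prop :=
  exists k : nat, forall x, iter k f x = 0.

Definition centralizer (R : nzRingType) (M : lmodType R) (phi : M -> M)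
  (psi : M -> M) : Prop :=
  Rlinear psi /\ (forall x, psi (phi x) = phi (psi x)).

Definition matscale (R : nzRingType) (m : nat) (r : R) (A : 'M[{poly R}]_m)
  : 'M[{poly R}]_m := r%:P *: A.

Definition Rspan (R : nzRingType) (m k : nat) (g : 'I_k -> 'M[{poly R}]_m)
  (A : 'M[{poly R}]_m) : Prop :=
  exists c : 'I_k -> R, A = \sum_(i < k) matscale (c i) (g i).

Definition Zsubmod (R : nzRingType) (m : nat) (P : 'M[{poly R}]_m -> Prop) : Prop :=
  [/\ P 0, (forall A B, P A -> P B -> P (A + B)) &
      (forall z A, central z -> P A -> P (matscale z A))].

From HB Require Import structures.
From mathcomp Require Import all_boot all_order all_algebra.
From mathcomp Require Import boolp classical_sets.
From mathcomp Require Import zify.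
Import GRing.Theory.
Set Implicit Arguments. Unset Strict Implicit. Unset Printing Implicit Defensive.
Local Open Scope ring_scope.
Local Open Scope classical_set_scope.

(* A map psi commuting with the nilpotent phi is determined by its values on
   any u_0, ..., u_(k-1) generating M modulo Im phi: if psi kills them, then
   psi(M) = psi(Im phi) = phi(psi(M)), hence psi(M) = phi^n(psi(M)) = 0.  Such
   generators exist with k = length(M / Im phi) <= length(ker phi) = m, and M
   itself is generated by the d elements y_l read off a composition series.
   Writing psi(u_j) = sum_l c_jl y_l, the md coefficients c_jl become the
   coefficients of one polynomial p, and the scalar matrix p lies in the R-span
   of the md matrices t^k; these codes of centralizing maps form a
   Z(R)-submodule mapping onto C_phi. *)

Lemma leq_telescope (f w : nat -> nat) e :
  (forall i, (i < e)%N -> (f i <= f i.+1 + w i)%N) ->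
  (f 0 <= f e + \sum_(i < e) w i)%N.
Proof.
elim: e => [|e IH] le_f; first by rewrite big_ord0 addn0.
rewrite big_ord_recr /= (leq_trans (IH (fun i lt_ie => le_f i (ltnW lt_ie)))) //.
by rewrite addnA addnAC leq_add2r le_f.
Qed.

Lemma sum_bool_le1 (b : nat -> bool) n :
  (forall i j, (i < j < n)%N -> b i -> b j -> False) ->
  (\sum_(i < n) b i <= 1)%N.
Proof.
elim: n => [|n IH] b_uniq; first by rewrite big_ord0.
rewrite big_ord_recr /=; case: (boolP (b n)) => [bn | _]; last first.
  by rewrite addn0 IH // => i j /andP[ij /ltnW jn]; apply: b_uniq; rewrite ij.
rewrite big1 // => i _; case: (boolP (b i)) => // bi.
by case: (b_uniq i n) => //; rewrite ltn_ord ltnSn.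
Qed.

Section LinearMaps.
Variables (R : nzRingType) (M N : lmodType R) (f : M -> N).
Hypothesis f_lin : Rlinear f.

Lemma RlinearD x y : f (x + y) = f x + f y.
Proof. by have := f_lin 1 x y; rewrite !scale1r. Qed.

Lemma Rlinear0 : f 0 = 0.
Proof. by apply: (addIr (f 0)); rewrite -RlinearD !add0r. Qed.

Lemma RlinearZ r x : f (r *: x) = r *: f x.
Proof. by have := f_lin r x 0; rewrite !addr0 Rlinear0 addr0. Qed.

Lemma RlinearN x : f (- x) = - f x.
Proof. by rewrite -scaleN1r RlinearZ scaleN1r. Qed.

Lemma RlinearB x y : f (x - y) = f x - f y.
Proof. by rewrite RlinearD RlinearN. Qed.

End LinearMaps.

Definition addset (V : nmodType) (A B : set V) : set V := [set a + b | a in A & b in B].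
Local Notation "A :+: B" := (addset A B) (at level 50, left associativity).

Lemma addsetS (V : nmodType) (A A' B B' : set V) :
  A `<=` A' -> B `<=` B' -> A :+: B `<=` A' :+: B'.
Proof. exact: image2_subset. Qed.

Lemma addset0 (V : nmodType) (A : set V) : A :+: [set 0] = A.
Proof.
apply/seteqP; split=> [_ [a Aa [_ -> <-]]|a Aa]; first by rewrite addr0.
by exists a => //; exists 0; rewrite ?addr0.
Qed.

Section Submodules.
Variables (R : nzRingType) (M : lmodType R).
Implicit Types (A B P : set M) (v : nat -> M).

Definition line (w : M) : set M := [set r *: w | r in setT].

Definition nspan n v : set M := [set \sum_(l < n) c l *: v l | c in @setT (nat -> R)].

Lemma submodN P x : submod P -> P x -> P (- x).
Proof. by case=> _ _ PZ Px; rewrite -scaleN1r; apply: PZ. Qed.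

Lemma submodB P x y : submod P -> P x -> P y -> P (x - y).
Proof. by move=> sP Px Py; case: (sP) => _ PD _; apply: PD (submodN sP Py). Qed.

Lemma submod0 : submod [set 0 : M].
Proof. by split=> [|x y -> ->|r x ->]; rewrite ?addr0 ?scaler0. Qed.

Lemma submodT : submod [set: M].
Proof. by []. Qed.

Lemma submodI A B : submod A -> submod B -> submod (A `&` B).
Proof.
case=> A0 AD AZ [B0 BD BZ]; split=> [//|x y [Ax Bx] [Ay By]|r x [Ax Bx]].
  by split; [apply: AD | apply: BD].
by split; [apply: AZ | apply: BZ].
Qed.

Lemma submod_add A B : submod A -> submod B -> submod (A :+: B).
Proof.
case=> A0 AD AZ [B0 BD BZ]; split=> [|_ _ [a Aa [b Bb <-]] [a' Aa' [b' Bb' <-]]|].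
- by exists 0 => //; exists 0; rewrite ?addr0.
- by exists (a + a'); [exact: AD | exists (b + b'); [exact: BD | rewrite addrACA]].
- move=> r _ [a Aa [b Bb <-]]; exists (r *: a); first exact: AZ.
  by exists (r *: b); [exact: BZ | rewrite scalerDr].
Qed.

Lemma submod_line w : submod (line w).
Proof.
split=> [|_ _ [r _ <-] [s _ <-]|s _ [r _ <-]].
- by exists 0; rewrite ?scale0r.
- by exists (r + s); rewrite ?scalerDl.
- by exists (s * r); rewrite ?scalerA.
Qed.

Lemma submod_nspan n v : submod (nspan n v).
Proof.
split=> [|_ _ [c _ <-] [c' _ <-]|r _ [c _ <-]].
- by exists (fun=> 0) => //; rewrite big1 // => l _; rewrite scale0r.
- exists (fun l => c l + c' l) => //; rewrite -big_split /=.
  by apply: eq_bigr => l _; rewrite scalerDl.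
- exists (fun l => r * c l) => //; rewrite scaler_sumr.
  by apply: eq_bigr => l _; rewrite scalerA.
Qed.

Lemma subset_addl A B : submod B -> A `<=` A :+: B.
Proof. by case=> B0 _ _ a Aa; exists a => //; exists 0; rewrite ?addr0. Qed.

Lemma subset_addr A B : submod A -> B `<=` A :+: B.
Proof. by case=> A0 _ _ b Bb; exists 0 => //; exists b; rewrite ?add0r. Qed.

Lemma addset_sub A B P : submod P -> A `<=` P -> B `<=` P -> A :+: B `<=` P.
Proof. by case=> _ PD _ AP BP _ [a /AP Pa [b /BP Pb <-]]; apply: PD. Qed.

Lemma nspan_sub n v P : submod P -> (forall l, (l < n)%N -> P (v l)) -> nspan n v `<=` P.
Proof.
case=> P0 PD PZ vP _ [c _ <-]; elim: n vP => [|n IH] vP; first by rewrite big_ord0.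
rewrite big_ord_recr /=; apply: PD; last exact/PZ/vP.
by apply: IH => l ln; apply/vP/ltnW.
Qed.

Lemma nspan_le n k v : (n <= k)%N -> nspan n v `<=` nspan k v.
Proof.
move=> le_nk _ [c _ <-]; exists (fun l => if (l < n)%N then c l else 0) => //.
rewrite (big_ord_widen k (fun l => c l *: v l)) // [RHS]big_mkcond /=.
by apply: eq_bigr => l _; case: ifP; rewrite ?scale0r.
Qed.

Lemma nspan_snoc n v w :
  nspan n v :+: line w `<=` nspan n.+1 (fun l => if l == n then w else v l).
Proof.
move=> _ [_ [c _ <-] [_ [r _ <-] <-]].
exists (fun l => if l == n then r else c l) => //.
rewrite big_ord_recr /= eqxx; congr (_ + _); apply: eq_bigr => l _.
by rewrite ltn_eqF.
Qed.

End Submodules.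

Section LinearSubmodules.
Variables (R : nzRingType) (M N : lmodType R) (f : M -> N).
Hypothesis f_lin : Rlinear f.

Lemma submod_preimage (P : set N) : submod P -> submod (f @^-1` P).
Proof.
case=> P0 PD PZ; split=> [|x y Px Py|r x Px] /=; first by rewrite Rlinear0.
  by rewrite RlinearD //; apply: PD.
by rewrite RlinearZ //; apply: PZ.
Qed.

Lemma submod_image (P : set M) : submod P -> submod (f @` P).
Proof.
case=> P0 PD PZ; split=> [|_ _ [x Px <-] [y Py <-]|r _ [x Px <-]].
- by exists 0; rewrite ?Rlinear0.
- by exists (x + y); rewrite ?RlinearD //; apply: PD.
- by exists (r *: x); rewrite ?RlinearZ //; apply: PZ.
Qed.

End LinearSubmodules.

Section CompositionSeries.
Variables (R : nzRingType) (M : lmodType R).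
Implicit Types (A B : set M) (N : nat -> set M).

Definition simple_over A B :=
  forall Q, submod Q -> A `<=` Q -> Q `<=` B -> Q `<=` A \/ B `<=` Q.

Lemma simple_over_addline A B w :
  submod A -> submod B -> A `<=` B -> simple_over A B -> B w -> ~ A w ->
  B `<=` A :+: line w.
Proof.
move=> sA sB AB AB_simple Bw nAw.
have lineB : line w `<=` B by case: sB => _ _ BZ _ [r _ <-]; apply: BZ.
have [/(_ w) wA | //] := AB_simple _ (submod_add sA (submod_line w))
  (subset_addl (submod_line w)) (addset_sub sB AB lineB).
by case: nAw; apply/wA/subset_addr => //; exists 1; rewrite ?scale1r.
Qed.

Definition comp_series N n :=
  [/\ forall i, submod (N i),
      forall i, (i < n)%N -> N i `<=` N i.+1,
      forall i, (i < n)%N -> ~ N i.+1 `<=` N i &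
      forall i, (i < n)%N -> simple_over (N i) (N i.+1)].

Lemma comp_lengthP (P : set M) n :
  comp_length P n -> exists2 N, comp_series N n & N 0%N = [set 0] /\ N n = P.
Proof.
case=> N [sN N0 Nn N_step]; exists N.
  split=> // i lt_in; have [N_incr [x [Nx nNx]] N_simple] := N_step i lt_in.
  - exact: N_incr.
  - by move/(_ x Nx).
  - by move=> Q sQ NQ QN; case: (N_simple Q sQ NQ QN) => QE; [left|right] => y; apply QE.
by split; apply/seteqP; split=> y; rewrite /= ?N0 ?Nn.
Qed.

End CompositionSeries.

Definition covered (R : nzRingType) (M : lmodType R) (N : nat -> set M) (X : set M) i :=
  N i.+1 `<=` N i :+: X.

(* For a composition series N, the length of (N n + X) / X, computed without
   forming quotient modules. *)
Definition colength (R : nzRingType) (M : lmodType R) (N : nat -> set M) (X : set M) n :=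
  (\sum_(i < n) ~~ `[< covered N X i >])%N.

Section Colength.
Variables (R : nzRingType) (M : lmodType R) (N : nat -> set M) (n : nat).
Hypothesis N_series : comp_series N n.
Implicit Types X : set M.

Let N_submod i : submod (N i). Proof. by case: N_series. Qed.

Let N_incr i : (i < n)%N -> N i `<=` N i.+1.
Proof. by case: N_series => _ incr _ _; apply: incr. Qed.

Let N_mono i k : (i + k <= n)%N -> N i `<=` N (i + k).
Proof.
elim: k => [|k IH] le_ikn; first by rewrite addn0.
by rewrite addnS in le_ikn *; apply: subset_trans (IH (ltnW le_ikn)) (N_incr le_ikn).
Qed.

Lemma colength_setT : colength N setT n = 0%N.
Proof.
rewrite /colength big1 // => i _; case: asboolP => // [[]] x _.
exact: (subset_addr (N_submod i)).
Qed.

Lemma colength_set0 : colength N [set 0] n = n.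
Proof.
rewrite /colength -[RHS]card_ord -sum1_card; apply: eq_bigr => i _.
case: asboolP => //; rewrite /covered addset0.
by case: N_series => _ _ N_proper _; move/(N_proper _ (ltn_ord i)).
Qed.

Lemma le_colength X X' : X `<=` X' -> (colength N X' n <= colength N X n)%N.
Proof.
move=> XX'; apply: leq_sum => i _.
case: (asboolP (covered N X i)) => [covX|_]; last by case: asboolP.
have /asboolP -> // : covered N X' i.
exact: subset_trans covX (addsetS (@subset_refl _ _) XX').
Qed.

Section SimpleExtension.
Variables X X' : set M.
Hypotheses (X_submod : submod X) (X'_submod : submod X') (XX' : X `<=` X').
Hypothesis XX'_simple : simple_over X X'.

Lemma covered_gain_unique i j : (i < j < n)%N ->
  ~ covered N X i -> covered N X' i -> ~ covered N X j -> covered N X' j -> False.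
Proof.
move=> /andP[lt_ij lt_jn] nXi X'i nXj X'j.
have Ni1j : N i.+1 `<=` N j by rewrite -(subnKC lt_ij); apply: N_mono; rewrite subnKC // ltnW.
pose Q := X' `&` (N i.+1 :+: X).
have XQ : X `<=` Q by move=> x Xx; split; [exact: XX' | exact: subset_addr].
have [QX|X'Q] := XX'_simple (submodI X'_submod (submod_add (N_submod _) X_submod)) XQ
  (@subIsetl _ _ _).
- apply: nXi => x Nx; have [a Nia [b X'b ab_x]] := X'i x Nx.
  exists a => //; exists b => //; apply: QX; split=> //; apply: (subset_addl X_submod).
  have -> : b = x - a by rewrite -ab_x addrAC subrr add0r.
  exact: submodB (N_submod _) Nx (N_incr (ltn_trans lt_ij lt_jn) Nia).
- apply: nXj => _ /X'j [a Nja [_ /X'Q [_ [c Nc [e Xe <-]]] <-]].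
  exists (a + c); last by exists e; rewrite ?addrA.
  by case: (N_submod j) => _ ND _; apply: ND (Ni1j _ Nc).
Qed.

Lemma colength_simple_over : (colength N X n <= colength N X' n + 1)%N.
Proof.
pose gain i := ~~ `[< covered N X i >] && `[< covered N X' i >].
apply: (@leq_trans (colength N X' n + \sum_(i < n) gain i)).
  by rewrite /colength -big_split leq_sum // => i _; rewrite /gain; do 2 case: asboolP.
rewrite leq_add2l; apply: sum_bool_le1 => i j ijn.
move=> /andP[/asboolPn nXi /asboolP X'i] /andP[/asboolPn nXj /asboolP X'j].
exact: (covered_gain_unique ijn nXi X'i nXj X'j).
Qed.

End SimpleExtension.

Lemma colength_generates X : submod X -> N 0%N `<=` X ->
  forall i, (i <= n)%N -> exists u, N i `<=` nspan (colength N X i) u :+: X.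
Proof.
move=> X_submod N0X; elim=> [|i IH] lt_in.
  by exists (fun=> 0); apply: subset_trans N0X (subset_addr (submod_nspan _ _)).
have [u Nu] := IH (ltnW lt_in).
rewrite /colength big_ord_recr /= -/(colength N X i).
case: (asboolP (covered N X i)) => [covX|/existsNP[w /not_implyP[Nw nXw]]].
  exists u; rewrite addn0; apply: subset_trans covX _.
  have SX_submod := submod_add (submod_nspan (colength N X i) u) X_submod.
  exact: addset_sub SX_submod Nu (subset_addr (submod_nspan _ _)).
have nNw : ~ N i w by move/(subset_addl X_submod).
have [_ _ _ N_simple] := N_series.
exists (fun l => if l == colength N X i then w else u l); rewrite addn1 => x.
move/(simple_over_addline (N_submod i) (N_submod _) (N_incr lt_in) (N_simple _ lt_in) Nw nNw).
move=> [_ /Nu [s Ss [b Xb <-]] [t Lt <-]].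
exists (s + t); first by apply: nspan_snoc; exists s => //; exists t.
by exists b; rewrite // addrAC.
Qed.

End Colength.

Lemma comp_series_generated (R : nzRingType) (M : lmodType R) (N : nat -> set M) n :
  comp_series N n -> N 0%N = [set 0] -> exists v, N n `<=` nspan n v.
Proof.
move=> N_series N0; have N0_set0 : N 0%N `<=` [set 0] by rewrite N0.
have [v] := colength_generates N_series (@submod0 _ _) N0_set0 (leqnn n).
by rewrite colength_set0 // addset0; exists v.
Qed.

Section ImageColength.
Variables (R : nzRingType) (M : lmodType R) (phi : M -> M).
Hypothesis phi_lin : Rlinear phi.
Implicit Types A B : set M.

Lemma simple_over_preimage A B : submod A -> submod B -> A `<=` B -> simple_over A B ->
  simple_over (phi @^-1` A) (phi @^-1` B).
Proof.
move=> sA sB AB AB_simple Q sQ AQ QB.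
have sPQ := submod_image phi_lin sQ.
have PQB : phi @` Q `<=` B by move=> _ [q Qq <-]; exact: QB.
have [PA|BP] := AB_simple _ (submod_add sA sPQ) (subset_addl sPQ) (addset_sub sB AB PQB).
- by left=> q Qq; apply/PA/(subset_addr sA); exists q.
- right=> y /BP [a Aa [_ [q Qq <-] a_phiq]].
  have /AQ Qyq : (phi @^-1` A) (y - q) by rewrite /= RlinearB // -a_phiq addrK.
  by rewrite -(subrK q y); case: sQ => _ QD _; apply: QD.
Qed.

Lemma simple_over_range A B y : submod A -> submod B -> A `<=` B -> simple_over A B ->
  B (phi y) -> ~ A (phi y) -> B `<=` A :+: range phi.
Proof.
move=> sA sB AB AB_simple By nAy.
apply: subset_trans (simple_over_addline sA sB AB AB_simple By nAy) (addsetS _ _) => //.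
by move=> _ [r _ <-]; exists (r *: y); rewrite ?RlinearZ.
Qed.

Lemma colength_range_le (N K : nat -> set M) d m :
  comp_series N d -> N 0%N = [set 0] -> N d = setT ->
  comp_series K m -> K 0%N = [set 0] -> K m = phi @^-1` [set 0] ->
  (colength N (range phi) d <= m)%N.
Proof.
move=> N_series N0 Nd K_series K0 Km.
have [N_submod N_incr _ N_simple] := N_series.
have [K_submod K_incr _ K_simple] := K_series.
(* The preimages Y i of N i form a chain from ker phi to M; where it grows,
   Im phi enters N i.+1 outside N i, so that step of N is absorbed by Im phi. *)
pose Y i := phi @^-1` N i.
have Y_submod i : submod (Y i) by apply: submod_preimage.
pose strict i := `[< ~ Y i.+1 `<=` Y i >].
have K_chain : (colength N (K 0%N) d <= colength N (K m) d + m)%N.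
  have := @leq_telescope (fun i => colength N (K i) d) (fun=> 1%N) m.
  rewrite sum1_card card_ord; apply=> i lt_im.
  exact: colength_simple_over (K_incr _ lt_im) (K_simple _ lt_im).
have Y_chain : (colength N (Y 0%N) d <= colength N (Y d) d + \sum_(i < d) strict i)%N.
  apply: (@leq_telescope (fun i => colength N (Y i) d) (fun i => nat_of_bool (strict i))).
  move=> i lt_id.
  rewrite /strict; case: asboolP => [_|/contrapT Y_stable]; last by rewrite addn0 le_colength.
  apply: colength_simple_over => //; first by move=> y; apply: N_incr.
  exact: simple_over_preimage (N_incr _ lt_id) (N_simple _ lt_id).
have strict_covered : (\sum_(i < d) strict i + colength N (range phi) d <= d)%N.
  rewrite /colength -big_split -[d in (_ <= d)%N]card_ord -sum1_card leq_sum // => i _.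
  rewrite /strict; case: asboolP => [/existsNP[y /not_implyP[Ny nNy]]|_]; last by case: asboolP.
  suff /asboolP -> : covered N (range phi) i by [].
  exact: simple_over_range (N_incr _ (ltn_ord i)) (N_simple _ (ltn_ord i)) Ny nNy.
rewrite K0 colength_set0 // Km -N0 -/(Y 0%N) in K_chain.
rewrite /Y Nd preimage_setT colength_setT // add0n in Y_chain.
rewrite -(leq_add2l (\sum_(i < d) strict i)); apply: leq_trans strict_covered _.
by apply: leq_trans K_chain _; rewrite leq_add2r.
Qed.

Lemma generated_mod_range (N K : nat -> set M) d m :
  comp_series N d -> N 0%N = [set 0] -> N d = setT ->
  comp_series K m -> K 0%N = [set 0] -> K m = phi @^-1` [set 0] ->
  exists u, setT `<=` nspan m u :+: range phi.
Proof.
move=> N_series N0 Nd K_series K0 Km.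
have range_submod := submod_image phi_lin (@submodT _ M).
have N0_range : N 0%N `<=` range phi by rewrite N0 => _ ->; exists 0; rewrite ?Rlinear0.
have [u] := colength_generates N_series range_submod N0_range (leqnn d).
have le_colength_m := colength_range_le N_series N0 Nd K_series K0 Km.
rewrite Nd => u_gen; exists u.
exact: subset_trans u_gen (addsetS (nspan_le le_colength_m) (@subset_refl _ _)).
Qed.

End ImageColength.

Section Centralizers.
Variables (R : nzRingType) (M : lmodType R) (phi : M -> M).
Hypothesis phi_lin : Rlinear phi.
Implicit Types p q : M -> M.

Lemma centralizer0 : centralizer phi (fun=> 0).
Proof. by split=> [r x y|x]; rewrite ?(Rlinear0 phi_lin) ?scaler0 ?addr0. Qed.

Lemma centralizerD p q : centralizer phi p -> centralizer phi q ->
  centralizer phi (fun x => p x + q x).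
Proof.
move=> [p_lin p_phi] [q_lin q_phi]; split=> [r x y|x]; last by rewrite p_phi q_phi RlinearD.
by rewrite p_lin q_lin scalerDr addrACA.
Qed.

Lemma centralizerN p : centralizer phi p -> centralizer phi (fun x => - p x).
Proof.
move=> [p_lin p_phi]; split=> [r x y|x]; last by rewrite p_phi RlinearN.
by rewrite p_lin opprD scalerN.
Qed.

Lemma centralizerZ z p : central z -> centralizer phi p ->
  centralizer phi (fun x => z *: p x).
Proof.
move=> zC [p_lin p_phi]; split=> [r x y|x]; last by rewrite p_phi RlinearZ.
by rewrite p_lin scalerDr !scalerA zC.
Qed.

Hypothesis phi_nil : nilpotent_map phi.

Lemma centralizer_vanish (S : set M) D : setT `<=` S :+: range phi ->
  centralizer phi D -> (forall s, S s -> D s = 0) -> forall x, D x = 0.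
Proof.
move=> S_gen [D_lin D_phi] DS; have [k phik] := phi_nil.
suff D_iter j x : exists y, D x = iter j phi (D y).
  by move=> x; have [y ->] := D_iter k x.
elim: j x => [|j IH] x; first by exists x.
have [z ->] := IH x; have [s Ss [_ [y _ <-] <-]] := S_gen z I.
by exists y; rewrite RlinearD // DS // add0r D_phi iterSr.
Qed.

Lemma centralizer_eq n (u : nat -> M) p q : setT `<=` nspan n u :+: range phi ->
  centralizer phi p -> centralizer phi q ->
  (forall j, (j < n)%N -> p (u j) = q (u j)) -> p = q.
Proof.
move=> u_gen p_cent q_cent pq_u; apply/funext => x; apply/eqP; rewrite -subr_eq0; apply/eqP.
have pq_cent := centralizerD p_cent (centralizerN q_cent).
apply: (centralizer_vanish u_gen pq_cent).
have := nspan_sub (submod_preimage (proj1 pq_cent) (@submod0 _ _)).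
by apply=> j lt_jn /=; rewrite pq_u // subrr.
Qed.

End Centralizers.

Definition Xpow_mx (R : nzRingType) m n (k : 'I_n) : 'M[{poly R}]_m := ('X^k)%:M.

Section PolynomialMatrices.
Variables (R : nzRingType) (m : nat).
Implicit Types A B : 'M[{poly R}]_m.

Lemma Rspan0 k (g : 'I_k -> 'M[{poly R}]_m) : Rspan g 0.
Proof. by exists (fun=> 0); rewrite big1 // => i _; rewrite /matscale scale0r. Qed.

Lemma RspanD k (g : 'I_k -> 'M[{poly R}]_m) A B : Rspan g A -> Rspan g B -> Rspan g (A + B).
Proof.
move=> [c ->] [c' ->]; exists (fun i => c i + c' i); rewrite -big_split /=.
by apply: eq_bigr => i _; rewrite /matscale polyCD scalerDl.
Qed.

Lemma RspanZ k (g : 'I_k -> 'M[{poly R}]_m) z A : Rspan g A -> Rspan g (matscale z A).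
Proof.
move=> [c ->]; exists (fun i => z * c i); rewrite /matscale scaler_sumr.
by apply: eq_bigr => i _; rewrite scalerA polyCM.
Qed.

Lemma Xpow_span_diag n (c : nat -> R) (j : 'I_m) :
  (\sum_(k < n) matscale (c k) (Xpow_mx R m k)) j j = \poly_(k < n) c k.
Proof.
rewrite summxE poly_def; apply: eq_bigr => k _.
by rewrite /matscale /Xpow_mx !mxE eqxx mulr1n mul_polyC.
Qed.

End PolynomialMatrices.

Section Encoding.
Variables (R : nzRingType) (M : lmodType R) (phi : M -> M) (d m : nat) (y u : nat -> M).
Hypotheses (phi_lin : Rlinear phi) (phi_nil : nilpotent_map phi).
Hypotheses (y_gen : setT `<=` nspan d y) (u_gen : setT `<=` nspan m u :+: range phi).
Implicit Types (A B : 'M[{poly R}]_m) (psi : M -> M).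

(* The coefficient of y l in psi (u j) is stored at t ^ (j * d + l). *)
Definition coef_block A (j : 'I_m) l : R := (A j j)`_(j * d + l).

Definition represents A psi :=
  forall j : 'I_m, psi (u j) = \sum_(l < d) coef_block A j l *: y l.

Definition centralizer_code A :=
  Rspan (@Xpow_mx R m (m * d)) A /\ exists2 psi, centralizer phi psi & represents A psi.

Definition decode A : M -> M :=
  if pselect (exists psi, centralizer phi psi /\ represents A psi) is left ex
  then projT1 (cid ex) else fun=> 0.

Lemma represents0 : represents 0 (fun=> 0).
Proof. by move=> j; rewrite big1 // => l _; rewrite /coef_block mxE coef0 scale0r. Qed.

Lemma representsD A B p q : represents A p -> represents B q ->
  represents (A + B) (fun x => p x + q x).
Proof.
move=> Ap Bq j; rewrite Ap Bq -big_split /=; apply: eq_bigr => l _.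
by rewrite /coef_block mxE coefD scalerDl.
Qed.

Lemma representsZ z A p : represents A p -> represents (matscale z A) (fun x => z *: p x).
Proof.
move=> Ap j; rewrite Ap scaler_sumr; apply: eq_bigr => l _.
by rewrite /coef_block /matscale mxE coefCM scalerA.
Qed.

Lemma represents_exists psi : exists2 A, Rspan (@Xpow_mx R m (m * d)) A & represents A psi.
Proof.
have /choice[C C_def] : forall j, exists c : nat -> R, psi (u j) = \sum_(l < d) c l *: y l.
  by move=> j; have [c _ <-] := @y_gen (psi (u j)) I; exists c.
exists (\sum_(k < m * d) matscale (C (k %/ d)%N (k %% d)%N) (Xpow_mx R m k)).
  by exists (fun k => C (k %/ d)%N (k %% d)%N).
move=> j; rewrite C_def; apply: eq_bigr => l _.
have lt_ld := ltn_ord l; have lt_jm := ltn_ord j.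
have lt_jdl_md : (j * d + l < m * d)%N by nia.
rewrite /coef_block (Xpow_span_diag _ (fun k => C (k %/ d)%N (k %% d)%N)) coef_poly.
rewrite lt_jdl_md divnMDl ?modnMDl; last by lia.
by rewrite divn_small // addn0 modn_small.
Qed.

Lemma decode_eq A psi : centralizer phi psi -> represents A psi -> decode A = psi.
Proof.
move=> psi_cent Apsi; rewrite /decode; case: pselect => [ex|[]]; last by exists psi.
case: (cid ex) => p [p_cent Ap] /=.
apply: (centralizer_eq phi_lin phi_nil u_gen p_cent psi_cent) => j lt_jm.
by rewrite (Ap (Ordinal lt_jm)) (Apsi (Ordinal lt_jm)).
Qed.

Lemma centralizer_code0 : centralizer_code 0.
Proof.
by split; [exact: Rspan0 | exists (fun=> 0); [exact: centralizer0 | exact: represents0]].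
Qed.

Lemma centralizer_codeD A B :
  centralizer_code A -> centralizer_code B -> centralizer_code (A + B).
Proof.
move=> [A_span [p p_cent Ap]] [B_span [q q_cent Bq]]; split; first exact: RspanD.
by exists (fun x => p x + q x); [exact: centralizerD | exact: representsD].
Qed.

Lemma centralizer_codeZ z A :
  central z -> centralizer_code A -> centralizer_code (matscale z A).
Proof.
move=> zC [A_span [p p_cent Ap]]; split; first exact: RspanZ.
by exists (fun x => z *: p x); [exact: centralizerZ | exact: representsZ].
Qed.

Lemma decode_centralizer A : centralizer_code A -> centralizer phi (decode A).
Proof. by move=> [_ [p p_cent Ap]]; rewrite (decode_eq p_cent Ap). Qed.

Lemma decodeD A B : centralizer_code A -> centralizer_code B ->
  decode (A + B) = (fun x => decode A x + decode B x).
Proof.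
move=> [_ [p p_cent Ap]] [_ [q q_cent Bq]].
rewrite (decode_eq p_cent Ap) (decode_eq q_cent Bq).
exact: decode_eq (centralizerD phi_lin p_cent q_cent) (representsD Ap Bq).
Qed.

Lemma decodeZ z A : central z -> centralizer_code A ->
  decode (matscale z A) = (fun x => z *: decode A x).
Proof.
move=> zC [_ [p p_cent Ap]]; rewrite (decode_eq p_cent Ap).
exact: decode_eq (centralizerZ phi_lin zC p_cent) (representsZ z Ap).
Qed.

Lemma decode_onto psi :
  centralizer phi psi -> exists A, centralizer_code A /\ decode A = psi.
Proof.
move=> psi_cent; have [A A_span Apsi] := represents_exists psi.
by exists A; split; [split=> //; exists psi | exact: decode_eq].
Qed.

End Encoding.

Theorem theorem4p6 (R : nzRingType) (M : lmodType R) (phi : M -> M)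
  (d m : nat) :
  fin_gen M -> semisimple M ->
  Rlinear phi -> nilpotent_map phi ->
  comp_length (fun _ : M => True) d ->
  comp_length (fun x : M => phi x = 0) m ->
  exists (g : 'I_(m * d)%N -> 'M[{poly R}]_m)
         (L' : 'M[{poly R}]_m -> Prop)
         (f : 'M[{poly R}]_m -> (M -> M)),
    (forall A, L' A -> Rspan g A) /\
    Zsubmod L' /\
    (forall A B, L' A -> L' B -> forall x, f (A + B) x = f A x + f B x) /\
    (forall z A, central z -> L' A -> forall x, f (matscale z A) x = z *: f A x) /\
    (forall A, L' A -> centralizer phi (f A)) /\
    (forall psi, centralizer phi psi -> exists A, L' A /\ f A = psi).
Proof.
move=> _ _ phi_lin phi_nil M_length ker_length.
have [N N_series [N0 Nd]] := comp_lengthP M_length.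
have [K K_series [K0 Km]] := comp_lengthP ker_length.
have [y] := comp_series_generated N_series N0; rewrite Nd => y_gen.
have [u u_gen] := generated_mod_range phi_lin N_series N0 Nd K_series K0 Km.
exists (@Xpow_mx R m (m * d)), (centralizer_code phi d y u), (decode phi d y u).
split; first by move=> A [].
split; first by split; [exact: centralizer_code0 | exact: centralizer_codeD |
                        exact: centralizer_codeZ].
split; first by move=> A B cA cB x; rewrite (decodeD phi_lin phi_nil u_gen cA cB).
split; first by move=> z A zC cA x; rewrite (decodeZ phi_lin phi_nil u_gen zC cA).
split; first exact: decode_centralizer phi_lin phi_nil u_gen.
exact: decode_onto phi_lin phi_nil y_gen u_gen.
Qed.
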